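(* Let $G$ be a unimodular locally compact group and let $\nu$ be a measure on $G$. Then: (a) $\nu$ is upper translation bounded if and only if $\mathrm{L}_\nu^+$ is finite; (b) $\nu$ is lower translation bounded if and only if $\mathrm{L}_\nu^-$ is positive; (c) $\nu$ is a Delone measure if and only if $\mathrm{L}_\nu^-$ is positive and $\mathrm{L}_\nu^+$ is finite.
   Context: A measure is a positive Borel measure. $\nu$ is upper translation bounded if there exist $C_u<\infty$ and a compact symmetric unit neighborhood $B_u$ with $\sup_{x\in G}\nu(B_ux)\le C_u$; lower translation bounded if there exist $C_l>0$ and a compact symmetric unit neighborhood $B_l$ with $\inf_{x\in G}\nu(B_lx)\ge C_l$; a Delone measure if both. With a Haar measure $m$, $\mathcal K$ the nonempty compact subsets and $\mathcal K_p$ those of positive Haar measure: $\mathrm{L}_\nu^-=\sup_{K\in \mathcal K}\inf_{A\in \mathcal K_p} \nu(KA)/m(A)$, $\mathrm{L}_\nu^+=\inf_{K\in \mathcal K}\sup_{A\in \mathcal K_p} \nu(A)/m(KA)$. *)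

From HB Require Import structures.
From mathcomp Require Import all_boot all_order all_algebra.
From mathcomp Require Import all_classical all_reals all_analysis.
Set Implicit Arguments. Unset Strict Implicit. Unset Printing Implicit Defensive.
Import Order.TTheory GRing.Theory Num.Theory.
Local Open Scope classical_set_scope.
Local Open Scope ring_scope.

#[short(type="topMeasurableType")]
HB.structure Definition TopMeasurable (d : measure_display) :=
  {T of Topological T & Measurable d T}.

Section LCGroup.
Context {d : measure_display} {G : topMeasurableType d}.
Variables (mul : G -> G -> G) (inv : G -> G) (e : G).

Definition lc_group : Prop :=
  [/\ ((forall x y z, mul x (mul y z) = mul (mul x y) z) /\
       (forall x, mul e x = x) /\ (forall x, mul x e = x)),
      ((forall x, mul (inv x) x = e) /\ (forall x, mul x (inv x) = e)),
      (continuous (fun p : G * G => mul p.1 p.2) /\ continuous inv),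
      (hausdorff_space G /\ locally_compact [set: G])
    & @measurable d G = <<s open >>].

Definition setmul (A B : set G) : set G :=
  [set z | exists2 a, A a & exists2 b, B b & z = mul a b].
Definition lshift (x : G) (A : set G) : set G := [set mul x a | a in A].
Definition rshift (A : set G) (x : G) : set G := [set mul a x | a in A].

Variable R : realType.
Local Open Scope ereal_scope.

Definition haar_measure (m : {measure set G -> \bar R}) : Prop :=
  [/\ (forall x A, measurable A -> m (lshift x A) = m A),
      (forall K, compact K -> m K < +oo),
      (forall U, open U -> U !=set0 -> 0 < m U),
      (forall A, measurable A ->
          m A = ereal_inf [set m U | U in [set U | open U /\ A `<=` U]])
    & (forall U, open U ->
          m U = ereal_sup [set m K | K in [set K | compact K /\ K `<=` U]])].

Definition right_invariant (m : {measure set G -> \bar R}) : Prop :=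
  forall x A, measurable A -> m (rshift A x) = m A.

(* Unimodular: the modular function is trivial, i.e. every left Haar measure
   is also right invariant. *)
Definition unimodular : Prop :=
  forall m : {measure set G -> \bar R}, haar_measure m -> right_invariant m.

Definition sym_unit_nbhd (B : set G) : Prop :=
  [/\ compact B, (forall x, B x -> B (inv x)) & nbhs e B].

Definition upper_translation_bounded (nu : {measure set G -> \bar R}) : Prop :=
  exists (C : R) (B : set G), sym_unit_nbhd B /\
    forall x, nu (rshift B x) <= C%:E.

Definition lower_translation_bounded (nu : {measure set G -> \bar R}) : Prop :=
  exists (C : R) (B : set G), [/\ (0 < C)%R, sym_unit_nbhd B &
    forall x, C%:E <= nu (rshift B x)].

Definition delone_measure (nu : {measure set G -> \bar R}) : Prop :=
  upper_translation_bounded nu /\ lower_translation_bounded nu.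

Definition cK : set (set G) := [set K | compact K /\ K !=set0].

Definition cKp (m : {measure set G -> \bar R}) : set (set G) :=
  [set A | compact A /\ 0 < m A].

(* ratio a / b for b a (finite, positive) Haar measure value *)
Definition eratio (a b : \bar R) : \bar R := a * ((fine b)^-1)%:E.

Definition Lminus (m nu : {measure set G -> \bar R}) : \bar R :=
  ereal_sup [set ereal_inf [set eratio (nu (setmul K A)) (m A) | A in cKp m]
            | K in cK].

Definition Lplus (m nu : {measure set G -> \bar R}) : \bar R :=
  ereal_inf [set ereal_sup [set eratio (nu A) (m (setmul K A)) | A in cKp m]
            | K in cK].

End LCGroup.

(* Everything rests on a packing argument. For a compact A and a unit
   neighbourhood W, pick a maximal finite F in A whose right translates W f
   are pairwise disjoint; when W is contained in B they all lie in B A, so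
   |F| m(W) <= m(B A), and by maximality A is covered by the translates
   (W^-1 W) f. If nu(B x) <= C and W^-1 W is contained in B, this gives
   nu(A) <= |F| C <= C m(B A) / m(W), so L+ is finite. Dually, if
   nu(B x) >= C with B symmetric, packing B-translates gives nu(B A) >= |F| C
   and m(A) <= |F| m(B B), so L- >= C / m(B B) > 0. Conversely, testing the
   densities on A = B x and using unimodularity, m(K B x) = m(K B), bounds
   nu(B x) uniformly; for the lower bound one enlarges B to the symmetric
   compact neighbourhood K B u (K B)^-1 u B. *)

From Pilot Require Import Defs.
From HB Require Import structures.
From mathcomp Require Import all_boot all_order all_algebra.
From mathcomp Require Import all_classical all_reals all_analysis finmap.
Set Implicit Arguments.
Unset Strict Implicit.
Unset Printing Implicit Defensive.
Import Order.TTheory GRing.Theory Num.Theory.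
Local Open Scope classical_set_scope.
Local Open Scope ring_scope.
Local Open Scope ereal_scope.

Section Group.
Context {d : measure_display} {G : topMeasurableType d}.
Variables (mul : G -> G -> G) (inv : G -> G) (e : G).
Hypothesis HG : lc_group mul inv e.

Lemma lc_mulgA x y z : mul x (mul y z) = mul (mul x y) z.
Proof. by case: HG => -[]. Qed.

Lemma lc_mul1g x : mul e x = x.
Proof. by case: HG => -[_ []]. Qed.

Lemma lc_mulg1 x : mul x e = x.
Proof. by case: HG => -[_ []]. Qed.

Lemma lc_mulVg x : mul (inv x) x = e.
Proof. by case: HG => _ []. Qed.

Lemma lc_mulgV x : mul x (inv x) = e.
Proof. by case: HG => _ []. Qed.

Lemma lc_invgK x : inv (inv x) = x.
Proof. by rewrite -[inv (inv x)]lc_mulg1 -(lc_mulVg x) lc_mulgA lc_mulVg lc_mul1g. Qed.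

Lemma lc_invg1 : inv e = e.
Proof. by rewrite -[inv e]lc_mulg1 lc_mulVg. Qed.

Lemma measurable_open (U : set G) : open U -> d.-measurable U.
Proof. by case: HG => _ _ _ _ ->; exact: sub_sigma_algebra. Qed.

Lemma measurable_compact (K : set G) : compact K -> d.-measurable K.
Proof.
case: HG => _ _ _ [hG _] _ cK; rewrite -(setCK K); apply/measurableC/measurable_open.
by apply: closed_openC; exact: compact_closed.
Qed.

Lemma le_measure_compact (R : realType) (mu : {measure set G -> \bar R})
    (A B : set G) :
  compact A -> compact B -> A `<=` B -> mu A <= mu B.
Proof.
move=> cA cB; apply: le_measure; rewrite in_setE; exact: measurable_compact.
Qed.

Lemma compact_setmul (A B : set G) : compact A -> compact B -> compact (setmul mul A B).
Proof.
case: HG => _ _ [cmul _] _ _ cA cB.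
have -> : setmul mul A B = [set mul p.1 p.2 | p in A `*` B].
  apply/seteqP; split=> z; first by case=> a Aa [b Bb ->]; exists (a, b).
  by case=> -[a b] [/= Aa Bb] <-; exists a => //; exists b.
by apply: continuous_compact; [exact: continuous_subspaceT | exact: compact_setX].
Qed.

Lemma rshift_setmul1 (A : set G) x : Defs.rshift mul A x = setmul mul A [set x].
Proof.
apply/seteqP; split=> z; first by case=> a Aa <-; exists a => //; exists x.
by case=> a Aa [b -> ->]; exists a.
Qed.

Lemma lshift_set1mul x (A : set G) : Defs.lshift mul x A = setmul mul [set x] A.
Proof.
apply/seteqP; split=> z; first by case=> a Aa <-; exists x => //; exists a.
by case=> _ -> [a Aa ->]; exists a.
Qed.

Lemma compact_rshift (A : set G) x : compact A -> compact (Defs.rshift mul A x).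
Proof.
by move=> cA; rewrite rshift_setmul1; apply: compact_setmul cA _; exact: compact_set1.
Qed.

Lemma compact_lshift x (A : set G) : compact A -> compact (Defs.lshift mul x A).
Proof.
by move=> cA; rewrite lshift_set1mul; apply: compact_setmul _ cA; exact: compact_set1.
Qed.

Lemma open_rshift (U : set G) x : open U -> open (Defs.rshift mul U x).
Proof.
case: HG => _ _ [cmul _] _ _ oU.
have -> : Defs.rshift mul U x = (fun y => mul y (inv x)) @^-1` U.
  apply/seteqP; split=> z.
    by case=> a Ua <- /=; rewrite -lc_mulgA lc_mulgV lc_mulg1.
  by move=> Uz; exists (mul z (inv x)) => //; rewrite -lc_mulgA lc_mulVg lc_mulg1.
apply: open_comp oU => y _.
apply: (continuous_comp (f := fun y => (y, inv x)) (g := fun p : G * G => mul p.1 p.2)).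
  exact: cvg_pair cvg_id (cvg_cst _).
exact: cmul.
Qed.

Lemma setmul_rshift (K A : set G) x :
  setmul mul K (Defs.rshift mul A x) = Defs.rshift mul (setmul mul K A) x.
Proof.
apply/seteqP; split=> z.
  case=> k Kk [_ [a Aa <-] ->]; exists (mul k a); last by rewrite lc_mulgA.
  by exists k => //; exists a.
case=> _ [k Kk [a Aa ->]] <-; exists k => //; exists (mul a x); last by rewrite lc_mulgA.
by exists a.
Qed.

Lemma meet_rshift (W : set G) a f :
  Defs.rshift mul W a `&` Defs.rshift mul W f !=set0 ->
  Defs.rshift mul (setmul mul (inv @` W) W) f a.
Proof.
case=> _ [[x Wx <-] [y Wy yf]]; exists (mul (inv x) y).
  by exists (inv x); [exists x | exists y].
by rewrite -lc_mulgA yf lc_mulgA lc_mulVg lc_mul1g.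
Qed.

Lemma ex_sym_unit_nbhd : exists B, sym_unit_nbhd inv e B.
Proof.
case: HG => _ _ [_ cinv] [_ lcG] _.
have [V nV [cV clV]] := lcG e I; rewrite withinET in nV.
exists (V `&` inv @^-1` V); split.
- by apply: compact_closedI => //; apply: preimage_closed => // x _; exact: cinv.
- by move=> x [Vx Vix]; split => //=; rewrite lc_invgK.
- have cinve : inv @ e --> e by rewrite -[X in _ --> X]lc_invg1; exact: cinv.
  by apply: filterI => //; exact: cinve.
Qed.

Lemma sym_unit_nbhd_hull (B K : set G) : sym_unit_nbhd inv e B -> compact K ->
  sym_unit_nbhd inv e (K `|` inv @` K `|` B).
Proof.
case: HG => _ _ [_ cinv] _ _ [cB symB nB] cK; split.
- apply/compactU/cB/compactU/continuous_compact/cK => //.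
  exact/continuous_subspaceT.
- move=> z [[Kz|[u Ku <-]]|Bz]; first by left; right; exists z.
    by left; left; rewrite lc_invgK.
  by right; exact: symB.
- by apply: filterS nB => z Bz; right.
Qed.

Lemma nbhs_inv_setmul (B : set G) : nbhs e B ->
  exists W, [/\ open W, W e & setmul mul (inv @` W) W `<=` B].
Proof.
case: HG => _ _ [cmul cinv] _ _ nB.
pose f (p : G * G) := mul (inv p.1) p.2.
have cf : {for (e, e), continuous f}.
  apply: (continuous_comp (f := fun p : G * G => (inv p.1, p.2))
    (g := fun p : G * G => mul p.1 p.2)); last exact: cmul.
  exact: cvg_pair (continuous_comp cvg_fst (cinv _)) cvg_snd.
have [[P Q] /= [nP nQ] PQ] : nbhs (e, e) (f @^-1` B).
  by apply: cf; rewrite /f /= lc_invg1 lc_mul1g.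
exists (P `&` Q)°; split; [exact: open_interior | exact: filterI |].
move=> _ [_ [x /interior_subset [Px _] <-] [y /interior_subset [_ Qy] ->]].
exact: (PQ (x, y)).
Qed.

End Group.

Lemma ex_maximal_fset (T : choiceType) (P : {fset T} -> Prop) (N : nat) :
  P fset0 -> (forall F, P F -> (#|` F| <= N)%N) ->
  exists F, P F /\ forall a, a \notin F -> ~ P (a |` F)%fset.
Proof.
move=> P0 PN.
pose sizeP n := `[< exists F, P F /\ #|` F| = n >].
have ex_sizeP : exists n, sizeP n by exists 0%N; apply/asboolP; exists fset0.
have sizeP_ub n : sizeP n -> (n <= N)%N by move=> /asboolP [F [/PN + <-]].
case: (ex_maxnP ex_sizeP sizeP_ub) => _ /asboolP [F [PF <-]] maxF.
exists F; split => // a aF PaF.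
have /maxF : sizeP #|` (a |` F)%fset| by apply/asboolP; exists (a |` F)%fset.
by rewrite cardfsU1 aF ltnn.
Qed.

Lemma sume_cst_fset (R : numDomainType) (I : choiceType) (D : {fset I}) (c : R) :
  \sum_(i <- D) c%:E = (#|` D|%:R * c)%:E.
Proof.
rewrite sumEFin card_fset_sum1 natr_sum mulr_suml.
by congr (_%:E); apply: eq_bigr => i _; rewrite mul1r.
Qed.

Section FiniteFamilies.
Context {d : measure_display} {T : measurableType d} {R : realType}.
Variable mu : {measure set T -> \bar R}.

Lemma measure_bigsetU_le (I : Type) (s : seq I) (F : I -> set T) :
  (forall i, measurable (F i)) ->
  mu (\big[setU/set0]_(i <- s) F i) <= \sum_(i <- s) mu (F i).
Proof.
move=> mF; elim: s => [|i s IH]; first by rewrite !big_nil measure0.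
rewrite !big_cons; apply: le_trans (measureU2 _ _ _) (leeD _ IH) => //.
exact: bigsetU_measurable.
Qed.

Lemma measure_le_sum_cover (I : choiceType) (s : seq I) (F : I -> set T) (A : set T) :
  measurable A -> (forall i, measurable (F i)) ->
  A `<=` \bigcup_(i in [set` s]) F i -> mu A <= \sum_(i <- s) mu (F i).
Proof.
move=> mA mF; rewrite bigcup_seq => AF; apply: le_trans (measure_bigsetU_le s mF).
by apply: le_measure AF; rewrite in_setE //; exact: bigsetU_measurable.
Qed.

Lemma measure_le_card_cover (I : choiceType) (D : {fset I}) (F : I -> set T)
    (A : set T) (c : R) :
  measurable A -> (forall i, measurable (F i)) -> (forall i, mu (F i) <= c%:E) ->
  A `<=` \bigcup_(i in [set` D]) F i -> mu A <= (#|` D|%:R * c)%:E.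
Proof.
move=> mA mF Fc AF; rewrite -sume_cst_fset.
by apply: le_trans (measure_le_sum_cover mA mF AF) _; exact: lee_sum.
Qed.

Lemma trivIset_card_le (I : choiceType) (D : {fset I}) (F : I -> set T)
    (S : set T) (c : R) :
  (forall i, measurable (F i)) -> trivIset [set` D] F -> measurable S ->
  (forall i, i \in D -> F i `<=` S) -> (forall i, c%:E <= mu (F i)) ->
  (#|` D|%:R * c)%:E <= mu S.
Proof.
move=> mF tF mS FS cF; rewrite -sume_cst_fset.
apply: le_trans (_ : \sum_(i <- D) mu (F i) <= _); first exact: lee_sum.
rewrite -measure_fbigsetU //; apply: le_measure; rewrite ?in_setE //.
  exact: bigsetU_measurable.
by rewrite -bigcup_fset => x [i Di]; exact: FS.
Qed.

End FiniteFamilies.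

Section MaximalPacking.
Context {d : measure_display} {G : topMeasurableType d} {R : realType}.
Variables (mul : G -> G -> G) (inv : G -> G) (e : G).
Hypothesis HG : lc_group mul inv e.
Variable mu : {measure set G -> \bar R}.
Variables (W S : set G) (w : R).
Hypotheses (We : W e) (w_gt0 : (0 < w)%R)
  (mW : forall x, measurable (Defs.rshift mul W x))
  (muW : forall x, w%:E <= mu (Defs.rshift mul W x))
  (mS : measurable S) (muS : mu S < +oo).

Lemma maximal_disjoint_rshift (A : set G) :
  (forall a, A a -> Defs.rshift mul W a `<=` S) ->
  exists F : {fset G}, [/\ [set` F] `<=` A,
    trivIset [set` F] (Defs.rshift mul W) &
    A `<=` \bigcup_(f in [set` F]) Defs.rshift mul (setmul mul (inv @` W) W) f].
Proof.
move=> AS.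
pose P (F : {fset G}) := [set` F] `<=` A /\ trivIset [set` F] (Defs.rshift mul W).
have P0 : P fset0 by split=> [x|i j]; rewrite /= in_fset0.
have PN F : P F -> (#|` F| <= Num.trunc (fine (mu S) / w))%N.
  have muS_ge0 : (0 <= fine (mu S))%R by rewrite fine_ge0.
  move=> [FA tF]; rewrite truncn_ge_nat ?divr_ge0 ?(ltW w_gt0) // ler_pdivlMr //.
  rewrite -lee_fin fineK ?ge0_fin_numE //.
  by apply: trivIset_card_le tF mS _ muW => // f /FA /AS.
have [F [[FA tF] maxF]] := ex_maximal_fset P0 PN.
exists F; split => // a Aa.
have [f Ff aWf] : exists2 f, f \in F &
    Defs.rshift mul W a `&` Defs.rshift mul W f !=set0.
  have [aF|aF] := boolP (a \in F).
    by exists a => //; exists (mul e a); split; exists e.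
  apply: contra_notP (maxF a aF) => noMeet; split.
    by move=> x /=; rewrite in_fset1U => /orP[/eqP ->|/FA].
  move=> i j /=; rewrite !in_fset1U => /orP[/eqP ->|Fi] /orP[/eqP ->|Fj] //.
  - by move=> aWj; case: noMeet; exists j.
  - by rewrite setIC => aWi; case: noMeet; exists i.
  - exact: tF.
by exists f => //; exact: (meet_rshift HG).
Qed.

End MaximalPacking.

Lemma ereal_lty_le_real (R : realDomainType) (x : \bar R) :
  x < +oo -> exists c : R, x <= c%:E.
Proof. by case: x => [c _|//|_]; [exists c | exists 0%R; exact: leNye]. Qed.

Lemma ereal_gt0_ge_real (R : realDomainType) (x : \bar R) :
  0 < x -> exists2 c : R, (0 < c)%R & c%:E <= x.
Proof. by case: x => [c|_|//]; [exists c | exists 1%R; rewrite ?leey]. Qed.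

Lemma eratio_le (R : realType) (x b : \bar R) (c : R) : (0 < fine b)%R ->
  (eratio x b <= c%:E) = (x <= (c * fine b)%:E).
Proof. by move=> b_gt0; rewrite /eratio lee_pdivrMr // EFinM. Qed.

Lemma eratio_ge (R : realType) (x b : \bar R) (c : R) : (0 < fine b)%R ->
  (c%:E <= eratio x b) = ((c * fine b)%:E <= x).
Proof. by move=> b_gt0; rewrite /eratio lee_pdivlMr // EFinM. Qed.

Section TranslationBounds.
Context {d : measure_display} {G : topMeasurableType d} {R : realType}.
Variables (mul : G -> G -> G) (inv : G -> G) (e : G).
Hypothesis HG : lc_group mul inv e.
Variable m : {measure set G -> \bar R}.
Hypotheses (Hm : haar_measure mul m) (Hunimod : unimodular mul R).

Lemma haar_rshift (A : set G) x : measurable A -> m (Defs.rshift mul A x) = m A.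
Proof. exact: Hunimod. Qed.

Lemma haar_lshift x (A : set G) : measurable A -> m (Defs.lshift mul x A) = m A.
Proof. by case: Hm => + _ _ _ _; apply. Qed.

Lemma haar_compact_lty (K : set G) : compact K -> m K < +oo.
Proof. by case: Hm => _ + _ _ _; apply. Qed.

Lemma haar_compact_fin_num (K : set G) : compact K -> m K \is a fin_num.
Proof. by move=> cK; rewrite ge0_fin_numE ?haar_compact_lty. Qed.

Lemma haar_nbhs_gt0 (B : set G) (x : G) : nbhs x B -> measurable B -> 0 < m B.
Proof.
case: Hm => _ _ + _ _ => open_gt0 nB mB.
apply: (lt_le_trans (open_gt0 _ (@open_interior _ B) _)); first by exists x.
apply: le_measure; rewrite ?in_setE //; last exact: interior_subset.
exact/(measurable_open HG)/open_interior.
Qed.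

Lemma haar_compact_nbhs_fine_gt0 (B : set G) (x : G) : nbhs x B -> compact B ->
  (0 < fine (m B))%R.
Proof.
move=> nB cB; rewrite -lte_fin fineK ?haar_compact_fin_num //.
exact: haar_nbhs_gt0 nB (measurable_compact HG cB).
Qed.

Variable nu : {measure set G -> \bar R}.

Lemma eratio_setmul_le (B W A : set G) (C : R) :
  compact B -> open W -> W e -> setmul mul (inv @` W) W `<=` B ->
  (forall x, nu (Defs.rshift mul B x) <= C%:E) -> cKp m A ->
  eratio (nu A) (m (setmul mul B A)) <= (C / fine (m W))%:E.
Proof.
move=> cB oW We WB nuB [cA mA_gt0].
have C_ge0 : (0 <= C)%R by rewrite -lee_fin (le_trans _ (nuB e)).
have WsubB : W `<=` B.
  move=> x Wx; apply: WB; exists (inv e); first by exists e.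
  by exists x => //; rewrite (lc_invg1 HG) (lc_mul1g HG).
have mW := measurable_open HG oW.
have mWx x : measurable (Defs.rshift mul W x).
  exact/(measurable_open HG)/(open_rshift HG).
have mW_fin : m W \is a fin_num.
  rewrite ge0_fin_numE // (le_lt_trans _ (haar_compact_lty cB)) //.
  have mB := measurable_compact HG cB.
  by apply: le_measure WsubB; rewrite in_setE.
set w := fine (m W).
have w_gt0 : (0 < w)%R.
  rewrite -lte_fin fineK //; apply: (haar_nbhs_gt0 (x := e)) mW.
  exact: open_nbhs_nbhs.
have cS : compact (setmul mul B A) := compact_setmul HG cB cA.
have mS := measurable_compact HG cS.
have WAS a : A a -> Defs.rshift mul W a `<=` setmul mul B A.
  by move=> Aa _ [x Wx <-]; exists x; [exact: WsubB | exists a].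
have muW x : w%:E <= m (Defs.rshift mul W x) by rewrite haar_rshift // /w fineK.
have [F [FA tF AF]] := maximal_disjoint_rshift HG We w_gt0 mWx muW mS
  (haar_compact_lty cS) WAS.
have FS : (#|` F|%:R * w <= fine (m (setmul mul B A)))%R.
  rewrite -lee_fin fineK ?haar_compact_fin_num //.
  by apply: trivIset_card_le tF mS _ muW => // f /FA; exact: WAS.
have nuA : nu A <= (#|` F|%:R * C)%:E.
  apply: measure_le_card_cover (measurable_compact HG cA) _ nuB _.
    by move=> x; exact/(measurable_compact HG)/(compact_rshift HG).
  by apply: subset_trans AF _ => x [f Ff]; exists f => //; exact: image_subset WB _ _.
rewrite eratio_le; last first.
  rewrite -lte_fin fineK ?haar_compact_fin_num //; apply: lt_le_trans mA_gt0 _.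
  apply: (le_measure_compact HG _ cA cS) => a Aa.
  by exists e; [exact: WsubB | exists a; rewrite ?(lc_mul1g HG)].
apply: le_trans nuA _; rewrite lee_fin mulrC -mulrA.
by apply: ler_wpM2l => //; rewrite mulrC ler_pdivlMr.
Qed.

Lemma upper_translation_bounded_Lplus :
  upper_translation_bounded mul inv e nu -> Lplus mul m nu < +oo.
Proof.
case=> C [B [[cB _ nB] nuB]].
have [W [oW We WB]] := nbhs_inv_setmul HG nB.
apply: (@le_lt_trans _ _ (C / fine (m W))%:E); last exact: ltry.
apply: ge_ereal_inf.
exists (ereal_sup [set eratio (nu A) (m (setmul mul B A)) | A in cKp m]).
  by exists B => //; split; [|exists e; exact: nbhs_singleton].
by apply: ge_ereal_sup => _ [A KpA <-]; exact: eratio_setmul_le.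
Qed.

Lemma Lplus_upper_translation_bounded :
  Lplus mul m nu < +oo -> upper_translation_bounded mul inv e nu.
Proof.
move=> /ereal_inf_lt [_ [K [cK [k Kk]] <-]] /ereal_lty_le_real [r sup_le].
have nu_le A : cKp m A -> eratio (nu A) (m (setmul mul K A)) <= r%:E.
  by move=> KpA; apply: le_trans sup_le; apply: ereal_sup_ubound; exists A.
have [B symB] := ex_sym_unit_nbhd HG.
have [cB _ nB] := symB.
have mB := measurable_compact HG cB.
have cKB : compact (setmul mul K B) := compact_setmul HG cK cB.
have mKB_gt0 : (0 < fine (m (setmul mul K B)))%R.
  rewrite -lte_fin fineK ?haar_compact_fin_num //.
  apply: (lt_le_trans (haar_nbhs_gt0 nB mB)); rewrite -(haar_lshift k mB).
  apply: (le_measure_compact HG _ (compact_lshift HG (x := k) cB) cKB) => _ [b Bb <-].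
  by exists k => //; exists b.
exists (r * fine (m (setmul mul K B)))%R, B; split => [//|x].
have := nu_le (Defs.rshift mul B x).
have mKB := measurable_compact HG cKB.
rewrite (setmul_rshift HG) haar_rshift // eratio_le //; apply; split.
  exact: compact_rshift HG _ _ cB.
by rewrite haar_rshift // (haar_nbhs_gt0 nB).
Qed.

Lemma haar_setmul_fine_gt0 (B : set G) : sym_unit_nbhd inv e B ->
  (0 < fine (m (setmul mul B B)))%R.
Proof.
move=> [cB _ nB]; have Be := nbhs_singleton nB.
apply: (haar_compact_nbhs_fine_gt0 (x := e) _ (compact_setmul HG cB cB)).
by apply: filterS nB => b Bb; exists e => //; exists b; rewrite ?(lc_mul1g HG).
Qed.

Lemma eratio_setmul_ge (B A : set G) (C : R) : (0 < C)%R ->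
  sym_unit_nbhd inv e B -> (forall x, C%:E <= nu (Defs.rshift mul B x)) ->
  cKp m A -> (C / fine (m (setmul mul B B)))%:E <= eratio (nu (setmul mul B A)) (m A).
Proof.
move=> C_gt0 symB nuB [cA mA_gt0]; have [cB symBB nB] := symB.
have Be : B e := nbhs_singleton nB.
have mB := measurable_compact HG cB.
have cBB : compact (setmul mul B B) := compact_setmul HG cB cB.
have mBB := measurable_compact HG cBB.
have bb_gt0 := haar_setmul_fine_gt0 symB.
set bb := fine (m (setmul mul B B)) in bb_gt0 *.
have cS : compact (setmul mul B A) := compact_setmul HG cB cA.
have mS := measurable_compact HG cS.
have BAS a : A a -> Defs.rshift mul B a `<=` setmul mul B A.
  by move=> Aa _ [x Bx <-]; exists x => //; exists a.
have mBx x : measurable (Defs.rshift mul B x).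
  exact/(measurable_compact HG)/(compact_rshift HG).
have muB x : (fine (m B))%:E <= m (Defs.rshift mul B x).
  by rewrite haar_rshift // fineK ?haar_compact_fin_num.
have [F [FA tF AF]] := maximal_disjoint_rshift HG Be
  (haar_compact_nbhs_fine_gt0 nB cB) mBx muB mS (haar_compact_lty cS) BAS.
have nuS : (#|` F|%:R * C)%:E <= nu (setmul mul B A).
  by apply: trivIset_card_le tF mS _ nuB => // f /FA; exact: BAS.
have mA : (fine (m A) <= #|` F|%:R * bb)%R.
  rewrite -lee_fin fineK ?haar_compact_fin_num //.
  apply: (measure_le_card_cover (F := Defs.rshift mul (setmul mul B B)))
    (measurable_compact HG cA) _ _ _.
  - by move=> x; exact/(measurable_compact HG)/(compact_rshift HG).
  - by move=> x; rewrite haar_rshift // /bb fineK ?haar_compact_fin_num.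
  have invBB : setmul mul (inv @` B) B `<=` setmul mul B B.
    by move=> _ [_ [y By <-] [z Bz ->]]; exists (inv y); [exact: symBB | exists z].
  by apply: subset_trans AF _ => x [f Ff]; exists f => //; exact: image_subset invBB _ _.
rewrite eratio_ge; last by rewrite -lte_fin fineK ?haar_compact_fin_num.
apply: le_trans nuS; rewrite lee_fin mulrAC ler_pdivrMr // mulrAC.
by rewrite [X in (_ <= X)%R]mulrC ler_pM2l.
Qed.

Lemma lower_translation_bounded_Lminus :
  lower_translation_bounded mul inv e nu -> 0 < Lminus mul m nu.
Proof.
case=> C [B [C_gt0 symB nuB]].
have bb_gt0 := haar_setmul_fine_gt0 symB.
apply: (@lt_le_trans _ _ (C / fine (m (setmul mul B B)))%:E).
  by rewrite lte_fin divr_gt0.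
apply: le_ereal_sup_tmp.
exists (ereal_inf [set eratio (nu (setmul mul B A)) (m A) | A in cKp m]).
  have [cB _ nB] := symB.
  by exists B => //; split => //; exists e; exact: nbhs_singleton.
by apply/ereal_infP => _ [A KpA <-]; exact: eratio_setmul_ge.
Qed.

Lemma Lminus_lower_translation_bounded :
  0 < Lminus mul m nu -> lower_translation_bounded mul inv e nu.
Proof.
move=> /ereal_sup_gt [_ [K [cK _] <-]] /ereal_gt0_ge_real [c c_gt0 le_inf].
have le_nu A : cKp m A -> c%:E <= eratio (nu (setmul mul K A)) (m A).
  by move=> KpA; apply: le_trans le_inf _; apply: ereal_inf_lbound; exists A.
have [B symB] := ex_sym_unit_nbhd HG.
have [cB _ nB] := symB.
have mB := measurable_compact HG cB.
have cKB : compact (setmul mul K B) := compact_setmul HG cK cB.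
have mB_gt0 := haar_compact_nbhs_fine_gt0 nB cB.
have symB' := sym_unit_nbhd_hull HG symB cKB.
have [cB' _ _] := symB'.
exists (c * fine (m B))%R, (setmul mul K B `|` inv @` setmul mul K B `|` B).
split => [|//|x]; first exact: mulr_gt0.
have mBx : m (Defs.rshift mul B x) = m B by rewrite haar_rshift.
have := le_nu (Defs.rshift mul B x).
rewrite mBx eratio_ge // (setmul_rshift HG) => /(_ _)/le_trans; apply.
- by split; [exact: (compact_rshift HG) | rewrite mBx (haar_nbhs_gt0 nB)].
- apply: (le_measure_compact HG _ (compact_rshift HG (x := x) cKB)).
    exact: (compact_rshift HG).
  by apply: image_subset => y KBy; left; left.
Qed.

End TranslationBounds.

Theorem lemma3p8 (R : realType) (d : measure_display) (G : topMeasurableType d)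
  (mul : G -> G -> G) (inv : G -> G) (e : G)
  (HG : lc_group mul inv e) (Hunimod : unimodular mul R)
  (m : {measure set G -> \bar R}) (Hm : haar_measure mul m)
  (nu : {measure set G -> \bar R}) :
  [/\ upper_translation_bounded mul inv e nu <-> Lplus mul m nu < +oo,
      lower_translation_bounded mul inv e nu <-> 0 < Lminus mul m nu
    & delone_measure mul inv e nu <->
        (0 < Lminus mul m nu /\ Lplus mul m nu < +oo)].
Proof.
have upper_iff : upper_translation_bounded mul inv e nu <-> Lplus mul m nu < +oo.
  by split; [exact: upper_translation_bounded_Lplus |
             exact: Lplus_upper_translation_bounded].
have lower_iff : lower_translation_bounded mul inv e nu <-> 0 < Lminus mul m nu.
  by split; [exact: lower_translation_bounded_Lminus |
             exact: Lminus_lower_translation_bounded].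
split=> //; rewrite /delone_measure upper_iff lower_iff.
exact: and_comm.
Qed.
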